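(* Let $S$ be a topological Clifford semigroup in which every maximal subgroup $G_e$ is open. Then $E(S)$ is a $G_\delta$-subset of $S$ if and only if, for every $e\in E(S)$, the singleton $\{e\}$ is a $G_\delta$-subset of $G_e$.
   Context: A Clifford semigroup is an inverse semigroup (each $x$ has a unique $x^{-1}$ with $xx^{-1}x=x$, $x^{-1}xx^{-1}=x^{-1}$) with $xx^{-1}=x^{-1}x$ for all $x$; topological means multiplication and inversion are continuous. $E(S)$ is the set of idempotents; $G_e:=\{x: xx^{-1}=e\}$ with the subspace topology. A $G_\delta$-subset is a countable intersection of open sets. *)

From mathcomp Require Import all_boot all_order.
From mathcomp Require Import all_classical topology.
Set Implicit Arguments. Unset Strict Implicit. Unset Printing Implicit Defensive.
Local Open Scope classical_set_scope.

Record topological_clifford_semigroup (T : topologicalType)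
    (mul : T -> T -> T) (inv : T -> T) : Prop := {
  tcs_assoc : forall x y z, mul x (mul y z) = mul (mul x y) z;
  tcs_inv1 : forall x, mul (mul x (inv x)) x = x;
  tcs_inv2 : forall x, mul (mul (inv x) x) (inv x) = inv x;
  tcs_inv_unique : forall x y, mul (mul x y) x = x -> mul (mul y x) y = y -> y = inv x;
  tcs_clifford : forall x, mul x (inv x) = mul (inv x) x;
  tcs_mul_cont : continuous (fun p : T * T => mul p.1 p.2);
  tcs_inv_cont : continuous inv
}.

Definition idempotents (T : Type) (mul : T -> T -> T) : set T :=
  [set x | mul x x = x].

Definition maxsubgroup (T : Type) (mul : T -> T -> T) (inv : T -> T) (e : T) : set T :=
  [set x | mul x (inv x) = e].

(* B is a G_delta-subset of the subspace A (subspace topology): B is a countable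
   intersection of sets open in A, i.e. of the form V `&` A with V open in T. *)
Definition Gdelta_in (T : topologicalType) (A B : set T) : Prop :=
  exists U : nat -> set T,
    (forall n, exists V : set T, open V /\ U n = V `&` A) /\
    \bigcap_n U n = B.

Definition Gdelta (T : topologicalType) (B : set T) : Prop :=
  exists U : nat -> set T, (forall n, open (U n)) /\ \bigcap_n U n = B.

(* An idempotent e is the only idempotent of G_e, so E(S) meets the open set
   G_e exactly in {e}; this gives the forward direction. Conversely the G_e are
   pairwise disjoint open sets covering E(S), so the union over e of G_delta
   representations of {e} in G_e is a G_delta representation of E(S): a point
   lying in every member of the union lies in a single G_e throughout. *)
From mathcomp Require Import all_boot all_order.
From mathcomp Require Import all_classical topology.
Set Implicit Arguments.
Local Open Scope classical_set_scope.

Section Gdelta_subspace.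
Variable T : topologicalType.

Lemma Gdelta_setIr (A B : set T) : Gdelta B -> Gdelta_in A (B `&` A).
Proof.
move=> [U [Uo <-]]; exists (fun n => U n `&` A); split.
  by move=> n; exists (U n).
by rewrite bigcapIl //; exists 0%N.
Qed.

Lemma Gdelta_bigcup_trivIset (K : Type) (D : set K) (A B : K -> set T) :
  (forall i, D i -> open (A i)) -> trivIset D A ->
  (forall i, D i -> Gdelta_in (A i) (B i)) ->
  Gdelta (\bigcup_(i in D) B i).
Proof.
move=> Aopen Atriv BG.
have /choice[U HU] : forall i, exists U : nat -> set T, D i ->
    (forall n, exists V, open V /\ U n = V `&` A i) /\ \bigcap_n U n = B i.
  move=> i; have [Di|nDi] := pselect (D i); last by exists (fun=> set0).
  by have [U HU] := BG i Di; exists U.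
have UA i n : D i -> U i n `<=` A i.
  by move=> Di; have [V [_ ->]] := (HU i Di).1 n; apply: subIsetr.
exists (fun n => \bigcup_(i in D) U i n); split.
  move=> n; apply: bigcup_open => i Di.
  by have [V [Vo ->]] := (HU i Di).1 n; apply: openI => //; apply: Aopen.
apply/seteqP; split => x /=; last first.
  by move=> [i Di]; rewrite -(HU i Di).2 => Ux n _; exists i => //; apply: Ux.
move=> Ux; have [i Di Uix] := Ux 0%N I; exists i => //.
rewrite -(HU i Di).2 => n _; have [j Dj Ujx] := Ux n I.
suff -> : i = j by [].
by apply: Atriv => //; exists x; split; [apply: (UA i 0%N) | apply: (UA j n)].
Qed.

End Gdelta_subspace.

Section Clifford.
Variables (T : topologicalType) (mul : T -> T -> T) (inv : T -> T).
Hypothesis hS : topological_clifford_semigroup mul inv.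

Lemma inv_idempotent e : idempotents mul e -> inv e = e.
Proof. by move=> ee; symmetry; apply: (tcs_inv_unique hS); rewrite /= in ee; rewrite !ee. Qed.

Lemma idempotents_maxsubgroup e :
  idempotents mul e -> idempotents mul `&` maxsubgroup mul inv e = [set e].
Proof.
move=> ee; apply/seteqP; split => x /=.
  by move=> [xx]; rewrite /maxsubgroup /= inv_idempotent // xx.
by move=> ->; rewrite /maxsubgroup /= inv_idempotent.
Qed.

Lemma trivIset_maxsubgroup (D : set T) : trivIset D (maxsubgroup mul inv).
Proof. by move=> e f _ _ [x [/= <- <-]]. Qed.

End Clifford.

Theorem lemma4p4 (T : topologicalType) (mul : T -> T -> T) (inv : T -> T)
  (hS : topological_clifford_semigroup mul inv)
  (hopen : forall e, idempotents mul e -> open (maxsubgroup mul inv e)) :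
  Gdelta (idempotents mul) <->
  (forall e, idempotents mul e -> Gdelta_in (maxsubgroup mul inv e) [set e]).
Proof.
split=> [EG e ee|singletonG].
  by rewrite -(idempotents_maxsubgroup hS ee); apply: Gdelta_setIr.
suff : Gdelta (\bigcup_(e in idempotents mul) [set e]).
  by rewrite bigcup_imset1 image_id.
exact: Gdelta_bigcup_trivIset hopen (trivIset_maxsubgroup _ _) singletonG.
Qed.
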